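(* Let $S$ be a numerical semigroup, let $\Lambda\subseteq\mathrm{IBetti}(S)$ and let $s\in S\setminus\Lambda$. Then $\mathrm B(s;\Lambda)\subseteq\mathrm Z(s)\setminus\mathrm I_b(S)$. Moreover, if $\{b\in\mathrm{IBetti}(S): b<_S s\}\subseteq\Lambda$, then $\mathrm B(s;\Lambda)=\mathrm Z(s)\setminus\mathrm I_b(S)$.
   Context: A numerical semigroup $S$ is a submonoid of $(\mathbb N,+)$ with finite complement, minimally generated by $\{n_1,\dots,n_e\}$. Write $a\le_S b$ if $b-a\in S$, and $a<_S b$ if moreover $a\ne b$. Let $\varphi:\mathbb N^e\to S$, $\varphi(a)=\sum_ia_in_i$; for $s\in S$, $\mathrm Z(s)=\varphi^{-1}(s)$. $\nabla_s$ is the graph on $\mathrm Z(s)$ with distinct $x,y$ adjacent iff $x\cdot y\neq0$; $s$ is a Betti element if $\nabla_s$ is disconnected; $\mathrm{Betti}(S)$ is the set of Betti elements. A factorization $z\in\mathrm Z(s)$ is isolated if $z\cdot x=0$ for all $x\in\mathrm Z(s)\setminus\{z\}$; $\mathrm I(s)$ is the set of isolated factorizations of $s$ and, for $\Lambda\subseteq S$, $\mathrm I(\Lambda)=\bigcup_{t\in\Lambda}\mathrm I(t)$. $\mathrm I_s(S)$ is the set of $z\in\mathbb N^e$ such that $\varphi(z)$ has exactly one factorization; $\mathrm I_b(S)=\bigcup_{b\in\mathrm{Betti}(S)}\mathrm I(b)$. $\mathrm{IBetti}(S)$ is the set of Betti elements $b$ with $\mathrm I(b)\ne\emptyset$. For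 $\Lambda\subseteq S$ and $s\in S$, the set of Betti restricted factorizations is $\mathrm B(s;\Lambda)=\{w+x_1+\cdots+x_l\in\mathrm Z(s): w\in\mathrm I_s(S),\ l\ge0,\ x_1,\dots,x_l\in\mathrm I(\Lambda)\}$. *)

From mathcomp Require Import all_boot.
Set Implicit Arguments. Unset Strict Implicit. Unset Printing Implicit Defensive.

(* A numerical semigroup is given by its minimal generators n : 'I_e -> nat.
   Factorizations are vectors in N^e, represented as {ffun 'I_e -> nat}. *)
Notation fact e := {ffun 'I_e -> nat}.

Section NS.
Variables (e : nat) (n : 'I_e -> nat).

Definition phi (a : fact e) : nat := \sum_(i < e) a i * n i.

Definition inS (s : nat) : Prop := exists a : fact e, phi a = s.

Definition numerical_semigroup_min_gen : Prop :=
  (exists N, forall m, N <= m -> inS m) /\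
  (forall i : 'I_e, ~ exists a : fact e, a i = 0 /\ phi a = n i).

Definition leS (a b : nat) : Prop := a <= b /\ inS (b - a).
Definition ltS (a b : nat) : Prop := leS a b /\ a <> b.

Definition Z (s : nat) (z : fact e) : Prop := phi z = s.

Definition dot (x y : fact e) : nat := \sum_(i < e) x i * y i.

Definition vadd (x y : fact e) : fact e := [ffun i => x i + y i].
Definition vsum (xs : seq (fact e)) : fact e := foldr vadd [ffun => 0] xs.

Definition adj (s : nat) (x y : fact e) : Prop :=
  Z s x /\ Z s y /\ x <> y /\ dot x y <> 0.

Inductive connected_in (s : nat) : fact e -> fact e -> Prop :=
| conn_refl x : connected_in s x x
| conn_step x y w : adj s x y -> connected_in s y w -> connected_in s x w.

Definition Betti (s : nat) : Prop :=
  exists x y, Z s x /\ Z s y /\ ~ connected_in s x y.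

Definition isolated (s : nat) (z : fact e) : Prop :=
  Z s z /\ forall x, Z s x -> x <> z -> dot z x = 0.

Definition I_of (Lam : nat -> Prop) (z : fact e) : Prop :=
  exists t, Lam t /\ isolated t z.

Definition I_s (z : fact e) : Prop := forall x, phi x = phi z -> x = z.

Definition I_b (z : fact e) : Prop := exists b, Betti b /\ isolated b z.

Definition IBetti (b : nat) : Prop := Betti b /\ exists z, isolated b z.

Definition Brf (s : nat) (Lam : nat -> Prop) (z : fact e) : Prop :=
  Z s z /\ exists (w : fact e) (xs : seq (fact e)),
    I_s w /\ (forall x, x \in xs -> I_of Lam x) /\ z = vadd w (vsum xs).

End NS.

From mathcomp Require Import all_boot.
From Stdlib Require Import Classical.
Set Implicit Arguments. Unset Strict Implicit.

(* After some arithmetic of factorization vectors, the first inclusion comes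
   from a cancellation argument: if z = w + x_1 + ... + x_l were isolated in a
   Betti element, then either z = w has a unique factorization (impossible for
   a Betti element), or replacing x_1 by another factorization of its Betti
   element t produces a factorization of s meeting z, unless z = x_1, which
   forces s = t in Lam.
   For the reverse inclusion, every factorization z without the uniqueness
   property lies above an isolated, non-unique factorization y <= z (remove
   common atoms until no other factorization meets it), and y is an isolated
   factorization of a Betti element t = phi(y).  Writing z = y + u, either
   u = 0 and z is in I_b(S), or t <_S s and induction on phi(u) decomposes u. *)

Section Factorizations.
Variables (e : nat) (n : 'I_e -> nat).

Implicit Types (x y z u w : fact e) (Lam : nat -> Prop).

Lemma vaddC x y : vadd x y = vadd y x.
Proof. by apply/ffunP => i; rewrite !ffunE addnC. Qed.

Lemma vaddCA x y z : vadd x (vadd y z) = vadd y (vadd x z).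
Proof. by apply/ffunP => i; rewrite !ffunE addnCA. Qed.

Lemma vadd0 x : vadd x [ffun => 0] = x.
Proof. by apply/ffunP => i; rewrite !ffunE addn0. Qed.

Lemma vaddI x y y' : vadd x y = vadd x y' -> y = y'.
Proof.
move=> E; apply/ffunP => i.
by have /eqP := congr1 (fun f : fact e => f i) E; rewrite !ffunE eqn_add2l => /eqP.
Qed.

Definition vsub x y : fact e := [ffun i => x i - y i].

Lemma vadd_sub x y : (forall i, y i <= x i) -> vadd y (vsub x y) = x.
Proof. by move=> le_yx; apply/ffunP => i; rewrite !ffunE subnKC. Qed.

Lemma phi_add x y : phi n (vadd x y) = phi n x + phi n y.
Proof. by rewrite /phi -big_split; apply: eq_bigr => i _; rewrite ffunE mulnDl. Qed.

Definition atom (i : 'I_e) : fact e := [ffun j => (j == i : nat)].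

Lemma phi_atom i : phi n (atom i) = n i.
Proof.
rewrite /phi (bigD1 i) //= big1 ?addn0; first by rewrite ffunE eqxx mul1n.
by move=> j /negbTE ne_ji; rewrite ffunE ne_ji.
Qed.

Lemma atom_le x i : 0 < x i -> forall j, atom i j <= x j.
Proof. by move=> xi_gt0 j; rewrite ffunE; case: eqP => [->|]. Qed.

Lemma dot_neq0_common_atom x y : dot x y <> 0 -> exists i, 0 < x i /\ 0 < y i.
Proof.
move=> /eqP; rewrite sum_nat_eq0 => /forallPn [i]; rewrite muln_eq0 negb_or.
by move=> /andP [xi yi]; exists i; rewrite !lt0n.
Qed.

Lemma dot_disjoint_shared x r y : dot (vadd x r) (vadd r y) = 0 -> r = [ffun => 0].
Proof.
move=> /eqP; rewrite sum_nat_eq0 => /forallP dot0; apply/ffunP => i.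
move: (dot0 i); rewrite !ffunE muln_eq0.
by case: (r i) => // k; rewrite addnS.
Qed.

Lemma inS_add a b : inS n a -> inS n b -> inS n (a + b).
Proof. by move=> [x <-] [y <-]; exists (vadd x y); rewrite phi_add. Qed.

Lemma ltS_self_add a b : inS n b -> 0 < b -> ltS n a (a + b).
Proof.
move=> Sb b_gt0; split; last by move=> /(congr1 (subn^~ a)); rewrite subnn addKn => b0; rewrite -b0 in b_gt0.
by split; [rewrite leq_addr | rewrite addKn].
Qed.

Lemma ltS_addr a b c : ltS n a b -> inS n c -> ltS n a (b + c).
Proof.
move=> [[le_ab Sba] ne_ab] Sc; have lt_ab : a < b by rewrite ltn_neqAle le_ab andbT; apply/eqP.
split; last by move=> E; move: lt_ab; rewrite E ltnNge leq_addr.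
by split; [rewrite (leq_trans le_ab) ?leq_addr | rewrite addnC -addnBA // addnC; apply: inS_add].
Qed.

Definition ambiguous z : Prop := exists x, phi n x = phi n z /\ x <> z.

Lemma not_I_s_ambiguous z : ~ I_s n z -> ambiguous z.
Proof.
move=> not_unique; apply: NNPP => not_amb; apply: not_unique => x Ex.
by apply: NNPP => ne_xz; apply: not_amb; exists x.
Qed.

Lemma Betti_two b : Betti n b -> exists x y, Z n b x /\ Z n b y /\ x <> y.
Proof.
case=> x [y [Zx [Zy not_conn]]]; exists x, y; do 2!split => //.
by move=> E; subst; apply: not_conn; constructor.
Qed.

Lemma Betti_not_I_s b z : Betti n b -> Z n b z -> ~ I_s n z.
Proof.
move=> /Betti_two [x [y [Zx [Zy ne_xy]]]] Zz unique; apply: ne_xy.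
by rewrite (unique x (etrans Zx (esym Zz))) (unique y (etrans Zy (esym Zz))).
Qed.

Lemma Betti_other t z : Betti n t -> exists y, Z n t y /\ y <> z.
Proof.
move=> /Betti_two [a [c [Za [Zc ne_ac]]]].
case: (classic (a = z)) => [Eaz | ]; last by exists a.
by exists c; split => // Ecz; apply: ne_ac; rewrite Eaz Ecz.
Qed.

Lemma isolated_not_connected t z x : isolated n t z -> x <> z -> ~ connected_in n t z x.
Proof.
move=> [_ iso] ne_xz conn; inversion conn as [|? y ? [_ [Zy [ne_zy dot_zy]]]]; subst => //.
by apply: dot_zy; apply: iso => // E; apply: ne_zy.
Qed.

Lemma isolated_ambiguous_IBetti y : isolated n (phi n y) y -> ambiguous y -> IBetti n (phi n y).
Proof.
move=> iso_y [x [Ex ne_xy]]; split; last by exists y.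
by exists y, x; do 2!split => //; apply: isolated_not_connected.
Qed.

Section Atoms.
Hypothesis hS : numerical_semigroup_min_gen n.

(* Minimality of the generators makes every generator positive. *)
Lemma gen_pos i : 0 < n i.
Proof.
case: hS => _ min_gen; rewrite lt0n; apply/eqP => ni0; apply: (min_gen i).
exists [ffun => 0]; rewrite ffunE ni0; split => //.
by apply/eqP; rewrite sum_nat_eq0; apply/forallP => j; rewrite ffunE.
Qed.

Lemma phi_eq0 x : phi n x = 0 -> x = [ffun => 0].
Proof.
move/eqP; rewrite sum_nat_eq0 => /forallP x0; apply/ffunP => i; rewrite ffunE.
by move: (x0 i); rewrite muln_eq0 (gtn_eqF (gen_pos i)) orbF => /eqP.
Qed.

Lemma I_s0 : I_s n [ffun => 0].
Proof. by move=> x Ex; apply: phi_eq0; rewrite Ex /phi big1 // => i _; rewrite ffunE. Qed.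

Lemma ambiguous_phi_pos y : ambiguous y -> 0 < phi n y.
Proof.
move=> [x [Ex ne_xy]]; rewrite lt0n; apply/eqP => y0; apply: ne_xy.
by rewrite (phi_eq0 y0) (phi_eq0 (etrans Ex y0)).
Qed.

(* A factorization that is not isolated shares an atom n_i with another
   factorization; removing it gives a smaller ambiguous one. *)
Lemma remove_common_atom z :
  ~ isolated n (phi n z) z ->
  exists z1, (forall j, z1 j <= z j) /\ phi n z1 < phi n z /\ ambiguous z1.
Proof.
move=> not_iso.
have [x [Ex [ne_xz dot_zx]]] : exists x, phi n x = phi n z /\ x <> z /\ dot z x <> 0.
  apply: NNPP => H; apply: not_iso; split => // x Ex ne_xz.
  by apply: NNPP => dot_zx; apply: H; exists x.
have [i [zi_gt0 xi_gt0]] := dot_neq0_common_atom dot_zx.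
have Ez := vadd_sub (atom_le zi_gt0); have Ex1 := vadd_sub (atom_le xi_gt0).
exists (vsub z (atom i)); split; first by move=> j; rewrite ffunE leq_subr.
split; first by rewrite -{2}Ez phi_add phi_atom -{1}[phi n _]add0n ltn_add2r gen_pos.
exists (vsub x (atom i)); split.
  by apply/eqP; rewrite -(eqn_add2l (n i)) -phi_atom -!phi_add Ex1 Ez Ex.
by move=> E; apply: ne_xz; rewrite -Ex1 -Ez E.
Qed.

Lemma isolated_below z :
  ambiguous z -> exists y, (forall j, y j <= z j) /\ ambiguous y /\ isolated n (phi n y) y.
Proof.
have [m lt_zm] := ubnP (phi n z); elim: m z lt_zm => // m IH z lt_zm amb_z.
case: (classic (isolated n (phi n z) z)) => [iso_z | not_iso]; first by exists z.
have [z1 [le_z1z [lt_z1z amb_z1]]] := remove_common_atom not_iso.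
have [y [le_yz1 rest]] := IH z1 (leq_trans lt_z1z lt_zm) amb_z1.
by exists y; split => // j; apply: leq_trans (le_yz1 j) (le_z1z j).
Qed.

Definition restricted Lam z : Prop :=
  exists w (xs : seq (fact e)),
    I_s n w /\ (forall x, x \in xs -> I_of n Lam x) /\ z = vadd w (vsum xs).

Lemma restricted_I_s Lam z : I_s n z -> restricted Lam z.
Proof. by move=> uniq_z; exists z, [::]; rewrite /= vadd0. Qed.

Lemma restricted_I_of Lam z : I_of n Lam z -> restricted Lam z.
Proof.
move=> Iz; exists [ffun => 0], [:: z]; split; first exact: I_s0.
split; first by move=> x; rewrite inE => /eqP ->.
by rewrite /= vadd0 vaddC vadd0.
Qed.

Lemma restricted_add Lam y u : I_of n Lam y -> restricted Lam u -> restricted Lam (vadd y u).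
Proof.
move=> Iy [w [xs [uniq_w [Ixs ->]]]]; exists w, (y :: xs); split => //; split.
  by move=> x; rewrite inE => /orP [/eqP -> | /Ixs].
by rewrite vaddCA.
Qed.

Lemma Brf_not_I_b Lam s z :
  (forall b, Lam b -> IBetti n b) -> ~ Lam s -> Brf n s Lam z -> ~ I_b n z.
Proof.
move=> LamI not_Lam_s [Zz [w [[|x1 rest] [uniq_w [Ixs Ez]]]]] [b [Bb [Zbz iso_z]]].
  by apply: (Betti_not_I_s Bb Zbz); rewrite Ez vadd0.
have [t [Lam_t [Ztx1 _]]] : I_of n Lam x1 by apply: Ixs; rewrite inE eqxx.
have [y [Zty ne_yx1]] := Betti_other x1 (proj1 (LamI _ Lam_t)).
set r := vadd w (vsum rest).
have Ez' : z = vadd x1 r by rewrite Ez vaddCA.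
have Zz' : Z n b (vadd r y) by rewrite /Z phi_add Zty -Ztx1 -phi_add vaddC -Ez'.
have r0 : r = [ffun => 0].
  apply: (@dot_disjoint_shared x1 r y); rewrite -Ez'; apply: iso_z => // E.
  by apply: ne_yx1; apply: (@vaddI r); rewrite E Ez' vaddC.
by apply: not_Lam_s; rewrite -Zz Ez' r0 vadd0 Ztx1.
Qed.

Lemma restricted_or_I_b Lam z :
  (forall b, IBetti n b -> ltS n b (phi n z) -> Lam b) -> restricted Lam z \/ I_b n z.
Proof.
have [m lt_zm] := ubnP (phi n z); elim: m z lt_zm => // m IH z lt_zm LamB.
case: (classic (I_s n z)) => [uniq_z | /not_I_s_ambiguous amb_z].
  by left; apply: restricted_I_s.
have [y [le_yz [amb_y iso_y]]] := isolated_below amb_z.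
have IB_y := isolated_ambiguous_IBetti iso_y amb_y.
set u := vsub z y; have Ez : vadd y u = z := vadd_sub le_yz.
have Pz : phi n z = phi n y + phi n u by rewrite -Ez phi_add.
have [u0 | u_gt0] := posnP (phi n u).
  by right; exists (phi n y); split; [case: IB_y | rewrite -Ez (phi_eq0 u0) vadd0].
have Iy : I_of n Lam y.
  by exists (phi n y); split => //; apply: LamB => //; rewrite Pz; apply: ltS_self_add u_gt0; exists u.
have ltS_u_z b : ltS n b (phi n u) -> ltS n b (phi n z).
  by move=> lt_bu; rewrite Pz addnC; apply: ltS_addr => //; exists y.
have lt_uz : phi n u < phi n z by rewrite Pz -{1}[phi n u]add0n ltn_add2r ambiguous_phi_pos.
left; rewrite -Ez; apply: restricted_add => //.
case: (IH u (leq_trans lt_uz lt_zm)) => [b IBb /ltS_u_z | // | [b [Bb iso_u]]]; first exact: LamB.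
apply: restricted_I_of; exists b; split => //; apply: LamB; first by split => //; exists u.
case: iso_u => <- _; rewrite Pz addnC; apply: ltS_self_add (ambiguous_phi_pos amb_y).
by exists y.
Qed.

End Atoms.
End Factorizations.

Theorem lemma5p4 (e : nat) (n : 'I_e -> nat)
  (hS : numerical_semigroup_min_gen n)
  (Lam : nat -> Prop) (hLam : forall b, Lam b -> IBetti n b)
  (s : nat) (hs : inS n s) (hsL : ~ Lam s) :
  (forall z, Brf n s Lam z -> Z n s z /\ ~ I_b n z) /\
  ((forall b, IBetti n b -> ltS n b s -> Lam b) ->
   forall z, Brf n s Lam z <-> Z n s z /\ ~ I_b n z).
Proof.
have sound z : Brf n s Lam z -> Z n s z /\ ~ I_b n z.
  by move=> Bz; split; [case: Bz | apply: Brf_not_I_b Bz].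
split => // LamB z; split; first exact: sound.
move=> [Zz not_Ib].
have LamB' b : IBetti n b -> ltS n b (phi n z) -> Lam b by rewrite Zz; apply: LamB.
by case: (restricted_or_I_b hS LamB') => // restr_z; split.
Qed.
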